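(* Let $p$ be a prime, let $n\geq 1$ and $k\geq 1$ be integers, and let $q$ be an integer with $\gcd(q,p)=1$. Define $f:\{0,1,\dots,p^n-1\}\to\{0,1,\dots,p^n-1\}$ by $f(x)\equiv q^x \pmod{p^n}$, $0\leq f(x)<p^n$. Then the number of $k$-periodic points of $f$, i.e. the number of $x\in\{0,1,\dots,p^n-1\}$ with $f^{k}(x)=x$ (where $f^k$ is the $k$-fold iterate of $f$), is at most $(p-1)^k$. *)

From mathcomp Require Import all_boot all_order all_algebra.
Set Implicit Arguments. Unset Strict Implicit. Unset Printing Implicit Defensive.
Import GRing.Theory Num.Theory.
Local Open Scope ring_scope.

Definition powmod (q : int) (m : nat) (x : nat) : nat :=
  `|((q ^+ x) %% (m%:Z))%Z|%N.

From mathcomp Require Import all_boot all_algebra cyclic.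
Set Implicit Arguments. Unset Strict Implicit. Unset Printing Implicit Defensive.
Import GRing.Theory.

(* A k-periodic point x of f(z) = Q^z mod p^n is determined by the residues
   mod p - 1 of its orbit x, f x, ..., f^(k-1) x, which gives at most (p-1)^k
   periodic points.  Indeed, if two periodic orbits agree mod p - 1 and, by
   induction, mod p^j, then by the Chinese remainder theorem they agree mod
   (p - 1) p^j = totient (p^(j+1)); by Euler's theorem applying f once more
   makes them agree mod p^(j+1), and periodicity returns to the same orbit. *)

Lemma powmodE (q : int) m x : (0 < m)%N ->
  powmod q m x = (`|(q %% m%:Z)%Z|%N ^ x %% m)%N.
Proof.
move=> m_gt0; rewrite /powmod.
have qm_ge0 : (0 <= (q %% m%:Z)%Z)%R by apply: modz_ge0; rewrite eqz_nat -lt0n.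
rewrite -modzXm -[(q %% m%:Z)%Z]gez0_abs //.
by rewrite -natz -natrX natz modz_nat !absz_nat natz absz_nat.
Qed.

Lemma coprime_absz_modz_pfactor (q : int) p n : (0 < n)%N ->
  gcdz q p%:Z = 1%N -> coprime `|(q %% (p ^ n)%:Z)%Z|%N p.
Proof.
move=> n_gt0 qp1.
have : coprimez (q %% (p ^ n)%:Z)%Z (p ^ n)%:Z.
  by rewrite /coprimez gcdz_modl -natz natrX natz; apply: coprimezXr; apply/eqP.
by rewrite coprimezE absz_nat coprime_pexpr.
Qed.

Lemma expn_eq_mod_totient Q m x y : coprime Q m ->
  x = y %[mod totient m] -> Q ^ x = Q ^ y %[mod m].
Proof.
move=> coQm xy.
have Q_tot_mul z : Q ^ (z * totient m) = 1 %[mod m].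
  by rewrite mulnC expnM -modnXm Euler_exp_totient // modnXm exp1n.
rewrite (divn_eq x (totient m)) (divn_eq y (totient m)) xy !expnD.
by rewrite -modnMml Q_tot_mul -[in RHS]modnMml Q_tot_mul.
Qed.

Lemma iter_period (T : Type) (f : T -> T) k x : iter k f x = x ->
  forall a b, iter (a * k + b) f x = iter b f x.
Proof.
move=> fkx; elim=> [|a IHa] b; first by rewrite mul0n.
by rewrite mulSn -addnA addnC iterD fkx.
Qed.

Section PowerMapPeriodicPoints.

Variables (p n Q : nat).
Hypotheses (p_prime : prime p) (coQp : coprime Q p).

Let f z := Q ^ z %% p ^ n.

Lemma powermap_eq_mod_pfactor j x y : (j < n)%N ->
  x = y %[mod p.-1 * p ^ j] -> f x = f y %[mod p ^ j.+1].
Proof.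
move=> jn xy; have pj_dvd : p ^ j.+1 %| p ^ n by rewrite dvdn_exp2l.
rewrite !modn_dvdm //; apply: expn_eq_mod_totient; first by rewrite coprimeXr.
by rewrite totient_pfactor.
Qed.

Lemma periodic_orbit_eq_mod k x y : (0 < k)%N ->
  iter k f x = x -> iter k f y = y ->
  (forall i, (i < k)%N -> iter i f x = iter i f y %[mod p.-1]) ->
  x = y %[mod p ^ n].
Proof.
move=> k_gt0 fkx fky orbit_xy.
have orbit_mod_pred i : iter i f x = iter i f y %[mod p.-1].
  by rewrite (divn_eq i k) !(iter_period fkx, iter_period fky) orbit_xy ?ltn_mod.
have co_pred_p j : coprime p.-1 (p ^ j).
  by apply: coprimeXr; rewrite -{2}(prednK (prime_gt0 p_prime)) coprimenS.
suff orbit_mod_pj j : (j <= n)%N -> forall i, iter i f x = iter i f y %[mod p ^ j].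
  exact: orbit_mod_pj n (leqnn n) 0.
elim: j => [|j IHj] jn i; first by rewrite expn0 !modn1.
rewrite -(iter_period fkx 1 i) -(iter_period fky 1 i).
have ->: (1 * k + i = (k.-1 + i).+1)%N by rewrite mul1n -addSn prednK.
rewrite !iterS.
apply: powermap_eq_mod_pfactor => //.
apply/eqP; rewrite chinese_remainder //; apply/andP; split; apply/eqP.
  exact: orbit_mod_pred.
exact: IHj (ltnW jn) _.
Qed.

Lemma card_powermap_periodic k : (0 < k)%N ->
  (#|[set x : 'I_(p ^ n) | iter k f x == x]| <= p.-1 ^ k)%N.
Proof.
move=> k_gt0.
have pred_gt0 : (0 < p.-1)%N by rewrite -ltnS prednK ?prime_gt0 ?prime_gt1.
pose res z : 'I_p.-1 := Ordinal (ltn_pmod z pred_gt0).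
pose orbit_res (x : 'I_(p ^ n)) : {ffun 'I_k -> 'I_p.-1} :=
  [ffun i : 'I_k => res (iter i f x)].
rewrite -(card_in_imset (f := orbit_res)).
  by apply: leq_trans (max_card _) _; rewrite card_ffun !card_ord.
move=> x y; rewrite !inE => /eqP fkx /eqP fky /ffunP xy; apply/val_inj => /=.
rewrite -(modn_small (ltn_ord x)) -(modn_small (ltn_ord y)).
apply: periodic_orbit_eq_mod fkx fky _ => // i ik.
by have := xy (Ordinal ik); rewrite !ffunE => /(congr1 val).
Qed.

End PowerMapPeriodicPoints.

Theorem corollary2 (p n k : nat) (q : int) :
  prime p -> (1 <= n)%N -> (1 <= k)%N -> gcdz q (p%:Z) = 1%N ->
  (#|[set x : 'I_(p ^ n) | iter k (powmod q (p ^ n)) x == x]| <= (p.-1) ^ k)%N.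
Proof.
move=> p_prime n_gt0 k_gt0 qp1.
have pn_gt0 : (0 < p ^ n)%N by rewrite expn_gt0 prime_gt0.
have coQp := coprime_absz_modz_pfactor n_gt0 qp1.
have powmod_eq : powmod q (p ^ n) =1 (fun z => `|(q %% (p ^ n)%:Z)%Z|%N ^ z %% p ^ n)%N.
  by move=> z; rewrite powmodE.
under eq_finset => x do rewrite (eq_iter powmod_eq).
exact: card_powermap_periodic.
Qed.
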